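(* In the setting described in the context, the map $\alpha\colon\Gamma\times\Gamma\to\mathrm M_{\mathcal U}$, $\alpha(g,h)=c(g,h)\varphi_{\mathcal U}(gh)^*$, is a $2$-cocycle with respect to the isometric action $\pi(g)T=\varphi_{\mathcal U}(g)T\varphi_{\mathcal U}(g)^*$ of $\Gamma$ on $\mathrm M_{\mathcal U}$, i.e. $\pi(g)\alpha(h,k)-\alpha(gh,k)+\alpha(g,hk)-\alpha(g,h)=0$ for all $g,h,k\in\Gamma$.
   Context: Fix a non-principal ultrafilter $\mathcal U$ on $\mathbb N$; $x_n=O_{\mathcal U}(y_n)$ means $x_n\le Cy_n$ for all $n$ in a set belonging to $\mathcal U$, for some constant $C$. Let $\Gamma=\langle S\mid R\rangle$ be finitely presented ($S,R$ finite, $\mathbb F_S$ free on $S$). For each $k$ fix a unitarily invariant, submultiplicative norm $\|\cdot\|$ on $\mathrm M_k(\mathbb C)$. For $\varphi\colon S\to\mathrm U(k)$ (extended to $\mathbb F_S$), $\mathrm{def}(\varphi)=\max_{r\in R}\|\varphi(r)-1_k\|$. Let $\varphi_n\colon S\to\mathrm U(k_n)$ with $\lim_{n\to\mathcal U}\mathrm{def}(\varphi_n)=0$. Let $\mathrm M_{\mathcal U}$ be the Banach space of bounded sequences $(T_n)$, $T_n\in\mathrm M_{k_n}(\mathbb C)$, modulo those with $\lim_{n\to\mathcal U}\|T_n\|=0$, and $\mathrm U_{\mathcal U}$ the group $\prod_n\mathrm U(k_n)$ modulo the normal subgroup of sequences with $\lim_{n\to\mathcal U}\|u_n-1_{k_n}\|=0$;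 $\mathrm U_{\mathcal U}$ acts isometrically on $\mathrm M_{\mathcal U}$ by left and right multiplication. The $\varphi_n$ induce a homomorphism $\varphi_{\mathcal U}\colon\Gamma\to\mathrm U_{\mathcal U}$ sending $g$ to the class of $(\varphi_n(w))_n$ for any $w\in\mathbb F_S$ representing $g$. Fix a section $\sigma\colon\Gamma\to\mathbb F_S$ of the canonical surjection and maps $\tilde\varphi_n\colon\Gamma\to\mathrm U(k_n)$ with $\tilde\varphi_n(1_\Gamma)=1$, $\tilde\varphi_n(g^{-1})=\tilde\varphi_n(g)^*$, $\|\varphi_n(\sigma(g))-\tilde\varphi_n(g)\|=O_{\mathcal U}(\mathrm{def}(\varphi_n))$ for all $g$. Let $c_n(g,h)=(\tilde\varphi_n(g)\tilde\varphi_n(h)-\tilde\varphi_n(gh))/\mathrm{def}(\varphi_n)$ if $\mathrm{def}(\varphi_n)>0$, else $0$; each sequence $(c_n(g,h))_n$ is $O_{\mathcal U}(1)$-bounded and $c(g,h)\in\mathrm M_{\mathcal U}$ denotes its class. *)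

From mathcomp Require Import all_boot all_order all_algebra.
From mathcomp Require Import reals complex.

Set Implicit Arguments.
Unset Strict Implicit.
Unset Printing Implicit Defensive.

Import Order.TTheory GRing.Theory Num.Theory.
Local Open Scope ring_scope.

Definition nonprincipal_ultrafilter (U : (nat -> Prop) -> Prop) : Prop :=
  U (fun _ => True) /\
  ~ U (fun _ => False) /\
  (forall A B : nat -> Prop, (forall n, A n -> B n) -> U A -> U B) /\
  (forall A B : nat -> Prop, U A -> U B -> U (fun n => A n /\ B n)) /\
  (forall A : nat -> Prop, U A \/ U (fun n => ~ A n)) /\
  (forall m : nat, ~ U (fun n => n = m)).

Definition Ulim0 {R : realType} (U : (nat -> Prop) -> Prop) (x : nat -> R) : Prop :=
  forall eps : R, 0 < eps -> U (fun n => `|x n| < eps).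

Definition bigO_U {R : realType} (U : (nat -> Prop) -> Prop) (x y : nat -> R) : Prop :=
  exists C : R, U (fun n => x n <= C * y n).

(* Words in the free group F_S (letter (s,false) = s, (s,true) = s^-1)  *)

Definition word (S : finType) := seq (S * bool).

Definition inv_letter (S : finType) (x : S * bool) : S * bool := (x.1, ~~ x.2).

Inductive elem_move (S : finType) (Rel : seq (word S)) : word S -> word S -> Prop :=
  | em_free : forall (u v : word S) (x : S * bool),
      elem_move Rel (u ++ [:: x; inv_letter x] ++ v) (u ++ v)
  | em_rel : forall (u v r : word S), r \in Rel ->
      elem_move Rel (u ++ r ++ v) (u ++ v).

(* equivalence relation generated by the elementary moves: two words are
   related iff they define the same element of <S | Rel> *)
Inductive rel_equiv (S : finType) (Rel : seq (word S)) : word S -> word S -> Prop :=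
  | re_refl : forall u, rel_equiv Rel u u
  | re_move : forall u v, elem_move Rel u v -> rel_equiv Rel u v
  | re_sym : forall u v, rel_equiv Rel u v -> rel_equiv Rel v u
  | re_trans : forall u v w, rel_equiv Rel u v -> rel_equiv Rel v w -> rel_equiv Rel u w.

Definition group_axioms (G : Type) (mul : G -> G -> G) (one : G) (inv : G -> G) : Prop :=
  [/\ (forall x y z, mul x (mul y z) = mul (mul x y) z),
      (forall x, mul one x = x), (forall x, mul x one = x),
      (forall x, mul (inv x) x = one) & (forall x, mul x (inv x) = one)].

Definition eval_word (S : finType) (G : Type) (mul : G -> G -> G) (one : G)
  (inv : G -> G) (gen : S -> G) (w : word S) : G :=
  foldr (fun x acc => mul (if x.2 then inv (gen x.1) else gen x.1) acc) one w.

Definition is_presentation (S : finType) (Rel : seq (word S)) (G : Type)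
  (mul : G -> G -> G) (one : G) (inv : G -> G) (gen : S -> G) : Prop :=
  (forall g : G, exists w : word S, eval_word mul one inv gen w = g) /\
  (forall u v : word S,
     eval_word mul one inv gen u = eval_word mul one inv gen v <-> rel_equiv Rel u v).

Local Open Scope complex_scope.

Definition mxadj {R : realType} {k : nat} (A : 'M[R[i]]_k) : 'M[R[i]]_k :=
  (map_mx conjc A)^T.

Definition unitary {R : realType} {k : nat} (A : 'M[R[i]]_k) : Prop :=
  A *m mxadj A = 1%:M /\ mxadj A *m A = 1%:M.

Definition ui_submult_norm {R : realType} (k : nat) (nrm : 'M[R[i]]_k -> R) : Prop :=
  (forall A, 0 <= nrm A) /\
  (forall A, nrm A = 0 -> A = 0) /\
  (forall A B, nrm (A + B) <= nrm A + nrm B) /\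
  (forall (a : R[i]) A, (nrm (a *: A))%:C = `|a| * (nrm A)%:C) /\
  (forall A B, nrm (A *m B) <= nrm A * nrm B) /\
  (forall U V A, unitary U -> unitary V -> nrm (U *m A *m V) = nrm A).

Definition word_mx {R : realType} {S : finType} {k : nat}
  (phi : S -> 'M[R[i]]_k) (w : word S) : 'M[R[i]]_k :=
  foldr (fun x acc => (if x.2 then mxadj (phi x.1) else phi x.1) *m acc) 1%:M w.

Definition defect {R : realType} {S : finType} {k : nat}
  (nrm : 'M[R[i]]_k -> R) (Rel : seq (word S)) (phi : S -> 'M[R[i]]_k) : R :=
  \big[Num.max/0]_(r <- Rel) nrm (word_mx phi r - 1%:M).

Definition cmx {R : realType} {k : nat} (d : R) (a b ab : 'M[R[i]]_k) : 'M[R[i]]_k :=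
  if 0 < d then (d^-1)%:C *: (a *m b - ab) else 0.

From mathcomp Require Import all_boot all_order all_algebra.
From mathcomp Require Import reals complex.
Import Order.TTheory GRing.Theory Num.Theory.
Local Open Scope ring_scope.
Local Open Scope complex_scope.

(* Put W(x, y) = psi(x) psi(y) psi(xy)^* - 1.  Both sides of
     (1 + W(g,h)) (1 + W(gh,l)) = psi(g) (1 + W(h,l)) psi(g)^* (1 + W(g,hl))
   equal psi(g) psi(h) psi(l) psi(ghl)^*, and expanding shows that the coboundary
   of W for the conjugation action of psi is a difference of two products of W's.
   Each W is O(def): psi is O(def)-close to g |-> phi(sigma g), and
   phi(sigma x) phi(sigma y) is turned into phi(sigma (xy)) by finitely many
   relator moves, each costing at most def.  Hence that coboundary is O(def^2),
   and replacing psi by phi_U in the action and in the adjoints changes it by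
   O(def) O(def), all norms being unitarily invariant.  Dividing by def, the
   coboundary of alpha is O(def), so it tends to 0 along U. *)

Section FilterBigO.
Context {R : realType} {U : (nat -> Prop) -> Prop}.
Hypotheses (U_T : U (fun _ => True))
  (U_mono : forall A B : nat -> Prop, (forall n, A n -> B n) -> U A -> U B)
  (U_meet : forall A B : nat -> Prop, U A -> U B -> U (fun n => A n /\ B n)).
Implicit Types (x y e f : nat -> R).

Lemma bigO_U_bound x e (C : R) : (forall n, x n <= C * e n) -> bigO_U U x e.
Proof. by move=> xC; exists C; apply: (U_mono _ _ _ U_T) => n _; apply: xC. Qed.

Lemma bigO_U_le x y e : (forall n, x n <= y n) -> bigO_U U y e -> bigO_U U x e.
Proof.
by move=> xy [C yC]; exists C; apply: (U_mono _ _ _ yC) => n; apply: le_trans.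
Qed.

Lemma bigO_UD x y e :
  bigO_U U x e -> bigO_U U y e -> bigO_U U (fun n => x n + y n) e.
Proof.
move=> [C xC] [C' yC']; exists (C + C').
by apply: (U_mono _ _ _ (U_meet _ _ xC yC')) => n [xn yn]; rewrite mulrDl lerD.
Qed.

Lemma bigO_UM x y e f : (forall n, 0 <= x n) -> (forall n, 0 <= y n) ->
  bigO_U U x e -> bigO_U U y f ->
  bigO_U U (fun n => x n * y n) (fun n => e n * f n).
Proof.
move=> x0 y0 [C xC] [C' yC']; exists (C * C').
by apply: (U_mono _ _ _ (U_meet _ _ xC yC')) => n [xn yn]; rewrite mulrACA ler_pM.
Qed.

(* No positivity of [e] is needed: [(e n)^-1 = 0] when [e n = 0]. *)
Lemma bigO_U_divr x e : (forall n, 0 <= e n) ->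
  bigO_U U x (fun n => e n * e n) -> bigO_U U (fun n => (e n)^-1 * x n) e.
Proof.
move=> e0 [C xC]; exists C; apply: (U_mono _ _ _ xC) => n xn.
have [->|en0] := eqVneq (e n) 0; first by rewrite invr0 !mul0r mulr0.
have ie0 : 0 <= (e n)^-1 by rewrite invr_ge0.
apply: le_trans (ler_wpM2l ie0 xn) _.
by rewrite mulrCA mulKf.
Qed.

Lemma bigO_U_Ulim0 x e :
  (forall n, 0 <= x n) -> bigO_U U x e -> Ulim0 U e -> Ulim0 U x.
Proof.
move=> x0 [C xC] e_lim eps eps0.
have C1_gt0 : 0 < `|C| + 1 by rewrite ltr_wpDl.
apply: (U_mono _ _ _ (U_meet _ _ xC (e_lim _ (divr_gt0 eps0 C1_gt0)))) => n [xn en].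
rewrite ger0_norm //; apply: (le_lt_trans xn).
apply: (le_lt_trans (ler_norm _)); rewrite normrM.
have C_le : `|C| <= `|C| + 1 by rewrite lerDl.
apply: (le_lt_trans (ler_wpM2r (normr_ge0 _) C_le)).
by rewrite -ltr_pdivlMl // mulrC.
Qed.

End FilterBigO.

Lemma mul1D_identity (Rg : pzRingType) (a b s t : Rg) :
  (1 + a) * (1 + b) = (1 + s) * (1 + t) -> s - b + t - a = a * b - s * t.
Proof.
rewrite !mulrDl !mulrDr !mul1r !mulr1 -!(addrA 1) => /addrI E.
have -> : a * b = t + (s + s * t) - (b + a).
  by rewrite -E addrA [RHS]addrC addKr.
by rewrite [RHS]addrAC addrA addrK (addrAC s) -(addrA (s + t)) -opprD (addrC s).
Qed.

Section Adjoint.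
Context {R : realType} {m : nat}.
Implicit Types A B P Q : 'M[R[i]]_m.

Lemma mxadjM A B : mxadj (A *m B) = mxadj B *m mxadj A.
Proof. by rewrite /mxadj map_mxM trmx_mul. Qed.

Lemma mxadj1 : mxadj (1%:M : 'M[R[i]]_m) = 1%:M.
Proof. by rewrite /mxadj map_scalar_mx tr_scalar_mx; congr (_%:M); exact: conjc1. Qed.

Lemma mxadjK : involutive (@mxadj R m).
Proof.
move=> A; rewrite /mxadj map_trmx trmxK -map_mx_comp.
by apply/matrixP=> i j; rewrite !mxE /= conjcK.
Qed.

Lemma unitary1 : unitary (1%:M : 'M[R[i]]_m).
Proof. by rewrite /unitary mxadj1 mulmx1. Qed.

Lemma unitary_adj P : unitary P -> unitary (mxadj P).
Proof. by case=> PP' P'P; split; rewrite mxadjK. Qed.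

Lemma unitaryM P Q : unitary P -> unitary Q -> unitary (P *m Q).
Proof.
case=> PP' P'P [QQ' Q'Q]; rewrite /unitary mxadjM; split.
  by rewrite mulmxA -(mulmxA P) QQ' mulmx1 PP'.
by rewrite mulmxA -(mulmxA _ _ P) P'P mulmx1 Q'Q.
Qed.

End Adjoint.

Section UnitarilyInvariantNorm.
Context {R : realType} {m : nat} {nrm : 'M[R[i]]_m -> R}.
Hypothesis nrmP : ui_submult_norm nrm.
Implicit Types A B P Q V : 'M[R[i]]_m.

Lemma nrm_ge0 A : 0 <= nrm A.
Proof. by case: nrmP. Qed.

Lemma ler_nrmD A B : nrm (A + B) <= nrm A + nrm B.
Proof. by case: nrmP => _ [_ []]. Qed.

Lemma ler_nrmM A B : nrm (A *m B) <= nrm A * nrm B.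
Proof. by case: nrmP => _ [_ [_ [_ []]]]. Qed.

Lemma nrmZ_ge0 (x : R) A : 0 <= x -> nrm (x%:C *: A) = x * nrm A.
Proof.
move=> x0; case: nrmP => _ [_ [_ [nrmZ _]]].
by apply: complexI; rewrite nrmZ ger0_norm ?lecR // -rmorphM.
Qed.

Lemma nrm0 : nrm 0 = 0.
Proof. by have := @nrmZ_ge0 0 0 (lexx 0); rewrite scaler0 mul0r. Qed.

Lemma nrmN A : nrm (- A) = nrm A.
Proof.
case: nrmP => _ [_ [_ [nrmZ _]]].
by apply: complexI; rewrite -scaleN1r nrmZ normrN normr1 mul1r.
Qed.

Lemma nrm_distrC A B : nrm (A - B) = nrm (B - A).
Proof. by rewrite -nrmN opprB. Qed.

Lemma ler_nrmB A B : nrm (A - B) <= nrm A + nrm B.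
Proof. by rewrite -(nrmN B) ler_nrmD. Qed.

Lemma nrm_unitaryMl V A : unitary V -> nrm (V *m A) = nrm A.
Proof.
case: nrmP => _ [_ [_ [_ [_ nrmU]]]] uV.
by rewrite -(mulmx1 (V *m A)) nrmU //; apply: unitary1.
Qed.

Lemma nrm_unitaryMr V A : unitary V -> nrm (A *m V) = nrm A.
Proof.
case: nrmP => _ [_ [_ [_ [_ nrmU]]]] uV.
by rewrite -{1}(mul1mx A) nrmU //; apply: unitary1.
Qed.

Lemma nrm_adjB P Q : unitary P -> unitary Q -> nrm (mxadj P - mxadj Q) = nrm (P - Q).
Proof.
move=> uP uQ.
have -> : mxadj P - mxadj Q = mxadj P *m (Q - P) *m mxadj Q.
  by rewrite mulmxBr mulmxBl -mulmxA uQ.1 mulmx1 uP.2 mul1mx.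
rewrite (nrm_unitaryMr _ _ (unitary_adj _ uQ)) (nrm_unitaryMl _ _ (unitary_adj _ uP)).
exact: nrm_distrC.
Qed.

Lemma ler_nrm_mulmxB P P' Q Q' : unitary P' -> unitary Q ->
  nrm (P *m Q - P' *m Q') <= nrm (P - P') + nrm (Q - Q').
Proof.
move=> uP' uQ.
have -> : P *m Q - P' *m Q' = (P - P') *m Q + P' *m (Q - Q').
  by rewrite mulmxBl mulmxBr addrA subrK.
by rewrite -(nrm_unitaryMr Q (P - P') uQ) -(nrm_unitaryMl P' (Q - Q') uP') ler_nrmD.
Qed.

Lemma ler_nrm_mulmx3B B P P' Q Q' : unitary P' -> unitary Q ->
  nrm (P *m B *m Q - P' *m B *m Q') <= nrm B * (nrm (P - P') + nrm (Q - Q')).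
Proof.
move=> uP' uQ.
have -> : P *m B *m Q - P' *m B *m Q' = (P - P') *m B *m Q + P' *m (B *m (Q - Q')).
  by rewrite !mulmxBl !mulmxBr !mulmxA addrA subrK.
apply: le_trans (ler_nrmD _ _) _.
rewrite (nrm_unitaryMr _ _ uQ) (nrm_unitaryMl _ _ uP') mulrDr (mulrC (nrm B)).
by apply: lerD; apply: ler_nrmM.
Qed.

End UnitarilyInvariantNorm.

Section Coboundary.
Context {R : realType} {m : nat} {G : Type} (mulG : G -> G -> G).

Definition mul_defect (a : G -> 'M[R[i]]_m) (x y : G) : 'M[R[i]]_m :=
  a x *m a y - a (mulG x y).

Definition coboundary2 (p : G -> 'M[R[i]]_m) (beta : G -> G -> 'M[R[i]]_m)
    (g h l : G) : 'M[R[i]]_m :=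
  let alpha x y := beta x y *m mxadj (p (mulG x y)) in
  p g *m alpha h l *m mxadj (p g) - alpha (mulG g h) l
  + alpha g (mulG h l) - alpha g h.

Lemma coboundary2Z p beta beta' (s : R[i]) g h l :
  (forall x y, beta' x y = s *: beta x y) ->
  coboundary2 p beta' g h l = s *: coboundary2 p beta g h l.
Proof.
move=> beta'E; rewrite /coboundary2 !beta'E.
by rewrite -!scalemxAl -scalemxAr -scalemxAl !(scalerBr, scalerDr).
Qed.

Context {nrm : 'M[R[i]]_m -> R}.
Hypothesis nrmP : ui_submult_norm nrm.

Lemma ler_nrm_coboundary2_mul_defect a g h l :
  associative mulG -> (forall x, unitary (a x)) ->
  nrm (coboundary2 a (mul_defect a) g h l) <=
    nrm (mul_defect a g h) * nrm (mul_defect a (mulG g h) l)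
    + nrm (mul_defect a h l) * nrm (mul_defect a g (mulG h l)).
Proof.
move=> mulA a_u.
pose W x y := mul_defect a x y *m mxadj (a (mulG x y)).
have W1 x y : 1%:M + W x y = a x *m a y *m mxadj (a (mulG x y)).
  by rewrite /W mulmxBl (a_u _).1 addrC subrK.
have conjW1 : 1%:M + a g *m W h l *m mxadj (a g) =
    a g *m (a h *m a l *m mxadj (a (mulG h l))) *m mxadj (a g).
  by rewrite -W1 mulmxDr mulmxDl mulmx1 (a_u g).1.
have nrmW x y : nrm (W x y) = nrm (mul_defect a x y).
  exact: nrm_unitaryMr nrmP _ _ (unitary_adj _ (a_u _)).
have cocycle : (1%:M + W g h) *m (1%:M + W (mulG g h) l) =
    (1%:M + a g *m W h l *m mxadj (a g)) *m (1%:M + W g (mulG h l)).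
  rewrite conjW1 !W1 mulA !mulmxA -(mulmxA _ (mxadj (a (mulG g h)))) (a_u _).2 mulmx1.
  rewrite -(mulmxA _ (mxadj (a g))) (a_u g).2 mulmx1.
  by rewrite -(mulmxA _ (mxadj _)) (a_u _).2 mulmx1.
have -> : coboundary2 a (mul_defect a) g h l = W g h *m W (mulG g h) l
    - (a g *m W h l *m mxadj (a g)) *m W g (mulG h l).
  exact: (@mul1D_identity 'M[R[i]]_m _ _ _ _ cocycle).
apply: le_trans (ler_nrmB nrmP _ _) _.
apply: lerD; apply: le_trans (ler_nrmM nrmP _ _) _; rewrite !nrmW //.
rewrite -mulmxA (nrm_unitaryMl nrmP _ _ (a_u g)).
by rewrite (nrm_unitaryMr nrmP _ _ (unitary_adj _ (a_u g))) !nrmW.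
Qed.

Lemma ler_nrm_coboundary2B p a beta g h l :
  (forall x, unitary (p x)) -> (forall x, unitary (a x)) ->
  nrm (coboundary2 p beta g h l - coboundary2 a beta g h l) <=
    nrm (beta h l) * (nrm (p g - a g)
                      + (nrm (p g - a g) + nrm (p (mulG h l) - a (mulG h l))))
    + nrm (beta (mulG g h) l) * nrm (p (mulG (mulG g h) l) - a (mulG (mulG g h) l))
    + nrm (beta g (mulG h l)) * nrm (p (mulG g (mulG h l)) - a (mulG g (mulG h l)))
    + nrm (beta g h) * nrm (p (mulG g h) - a (mulG g h)).
Proof.
move=> p_u a_u.
have adjB x B : nrm (B *m mxadj (p x) - B *m mxadj (a x)) <= nrm B * nrm (p x - a x).
  by rewrite -mulmxBr -(nrm_adjB nrmP _ _ (p_u x) (a_u x)) ler_nrmM.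
have conjB : nrm (p g *m (beta h l *m mxadj (p (mulG h l))) *m mxadj (p g)
                  - a g *m (beta h l *m mxadj (a (mulG h l))) *m mxadj (a g))
    <= nrm (beta h l) * (nrm (p g - a g)
                         + (nrm (p g - a g) + nrm (p (mulG h l) - a (mulG h l)))).
  rewrite !mulmxA -!(mulmxA _ (mxadj _)) -!mxadjM.
  apply: le_trans (ler_nrm_mulmx3B nrmP _ _ _ _ _ (a_u g) _) _.
    by apply: unitary_adj; apply: unitaryM.
  rewrite (nrm_adjB nrmP _ _ (unitaryM _ _ (p_u _) (p_u _))
                          (unitaryM _ _ (a_u _) (a_u _))).
  by rewrite ler_wpM2l ?(nrm_ge0 nrmP) // lerD // ler_nrm_mulmxB.
have subrDD (x y z t : 'M[R[i]]_m) : (x + y) - (z + t) = (x - z) + (y - t).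
  by rewrite opprD addrACA.
rewrite /coboundary2 !subrDD -!opprD.
apply: le_trans (ler_nrmB nrmP _ _) _; apply: lerD; last exact: adjB.
apply: le_trans (ler_nrmD nrmP _ _) _; apply: lerD; last exact: adjB.
by apply: le_trans (ler_nrmB nrmP _ _) _; apply: lerD; [exact: conjB | exact: adjB].
Qed.

End Coboundary.

(* The case [d = 0] of [cmx] is covered by [0^-1 = 0]. *)
Lemma cmxE {R : realType} {m : nat} (d : R) (A B AB : 'M[R[i]]_m) :
  0 <= d -> cmx d A B AB = (d^-1)%:C *: (A *m B - AB).
Proof.
rewrite /cmx le_eqVlt => /orP[/eqP <-|->] //.
by rewrite ltxx invr0 scale0r.
Qed.

Section Presentation.
Context {R : realType} {S : finType}.

Lemma word_mx_cat {m} (phi : S -> 'M[R[i]]_m) (u v : word S) :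
  word_mx phi (u ++ v) = word_mx phi u *m word_mx phi v.
Proof. by elim: u => [|x u IHu] /=; rewrite ?mul1mx // -mulmxA -IHu. Qed.

Lemma word_mx_unitary {m} (phi : S -> 'M[R[i]]_m) :
  (forall s, unitary (phi s)) -> forall w, unitary (word_mx phi w).
Proof.
move=> phi_u; elim=> [|[s b] w IHw]; first exact: unitary1.
apply: unitaryM => //; case: b; [apply: unitary_adj|]; exact: phi_u.
Qed.

Lemma defect_ge0 {m} (nrm : 'M[R[i]]_m -> R) Rel (phi : S -> 'M[R[i]]_m) :
  0 <= defect nrm Rel phi.
Proof.
rewrite /defect; elim: Rel => [|r Rel IH]; first by rewrite big_nil.
by rewrite big_cons le_max IH orbT.
Qed.

Lemma ler_defect {m} (nrm : 'M[R[i]]_m -> R) Rel (phi : S -> 'M[R[i]]_m) r :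
  r \in Rel -> nrm (word_mx phi r - 1%:M) <= defect nrm Rel phi.
Proof. by move=> Rel_r; rewrite /defect (le_bigmax_seq _ _ _ _ Rel_r). Qed.

Lemma word_mx_rel_equiv (Rel : seq (word S)) (u v : word S) :
  rel_equiv Rel u v -> exists N : nat,
    forall m (nrm : 'M[R[i]]_m -> R) (phi : S -> 'M[R[i]]_m),
    ui_submult_norm nrm -> (forall s, unitary (phi s)) ->
    nrm (word_mx phi u - word_mx phi v) <= N%:R * defect nrm Rel phi.
Proof.
elim=> {u v} [u | u v [u' v' x | u' v' r Rel_r] | u v _ [N IH]
             | u v w _ [N1 IH1] _ [N2 IH2]].
- by exists 0%N => m nrm phi nrmP _; rewrite subrr (nrm0 nrmP) mul0r.
- exists 0%N => m nrm phi nrmP phi_u; rewrite !word_mx_cat.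
  have -> : word_mx phi [:: x; inv_letter x] = 1%:M.
    by rewrite /word_mx /= mulmx1; case: x.2 (phi_u x.1) => -[].
  by rewrite mul1mx subrr (nrm0 nrmP) mul0r.
- exists 1%N => m nrm phi nrmP phi_u; rewrite mul1r !word_mx_cat.
  have -> : word_mx phi u' *m (word_mx phi r *m word_mx phi v')
            - word_mx phi u' *m word_mx phi v'
          = word_mx phi u' *m (word_mx phi r - 1%:M) *m word_mx phi v'.
    by rewrite mulmxBr mulmxBl mulmx1 !mulmxA.
  rewrite (nrm_unitaryMr nrmP _ _ (word_mx_unitary _ phi_u _)).
  by rewrite (nrm_unitaryMl nrmP _ _ (word_mx_unitary _ phi_u _)) ler_defect.
- by exists N => m nrm phi nrmP phi_u; rewrite (nrm_distrC nrmP) IH.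
- exists (N1 + N2)%N => m nrm phi nrmP phi_u.
  rewrite -(subrKA (word_mx phi v)) natrD mulrDl.
  by apply: le_trans (ler_nrmD nrmP _ _) _; rewrite lerD ?IH1 ?IH2.
Qed.

End Presentation.

Lemma eval_word_cat (S : finType) (G : Type) (mulG : G -> G -> G) (oneG : G)
    (invG : G -> G) (gen : S -> G) (u v : word S) :
  group_axioms mulG oneG invG ->
  eval_word mulG oneG invG gen (u ++ v) =
  mulG (eval_word mulG oneG invG gen u) (eval_word mulG oneG invG gen v).
Proof.
by case=> mulA mul1g _ _ _; elim: u => [|x u IHu] /=; rewrite ?mul1g // IHu mulA.
Qed.

Lemma section_mul_defect_bound (R : realType) {S : finType} {Rel : seq (word S)}
    {G : Type} {mulG : G -> G -> G} {oneG : G} {invG : G -> G} {gen : S -> G}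
    {sigma : G -> word S} (x y : G) :
  group_axioms mulG oneG invG -> is_presentation Rel mulG oneG invG gen ->
  (forall g, eval_word mulG oneG invG gen (sigma g) = g) ->
  exists N : nat, forall m (nrm : 'M[R[i]]_m -> R) (phi : S -> 'M[R[i]]_m),
    ui_submult_norm nrm -> (forall s, unitary (phi s)) ->
    nrm (mul_defect mulG (fun g => word_mx phi (sigma g)) x y)
      <= N%:R * defect nrm Rel phi.
Proof.
move=> HG [_ evalP] sigmaK.
have /evalP /(word_mx_rel_equiv (R := R)) [N HN] :
    eval_word mulG oneG invG gen (sigma x ++ sigma y)
    = eval_word mulG oneG invG gen (sigma (mulG x y)).
  by rewrite eval_word_cat // !sigmaK.
by exists N => m nrm phi nrmP phi_u; rewrite /mul_defect -word_mx_cat HN.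
Qed.

Section QuasiRepresentations.
Context {R : realType} {U : (nat -> Prop) -> Prop}.
Hypotheses (U_mono : forall A B : nat -> Prop, (forall n, A n -> B n) -> U A -> U B)
  (U_meet : forall A B : nat -> Prop, U A -> U B -> U (fun n => A n /\ B n)).
Context {k : nat -> nat} {nrm : forall m, 'M[R[i]]_m -> R} {d : nat -> R}.
Hypotheses (nrmP : forall m, ui_submult_norm (nrm m)) (d_ge0 : forall n, 0 <= d n).
Context {G : Type} {mulG : G -> G -> G} {a p : forall n, G -> 'M[R[i]]_(k n)}.
Hypotheses (mulA : associative mulG)
  (a_u : forall n x, unitary (a n x)) (p_u : forall n x, unitary (p n x))
  (p_near_a : forall x, bigO_U U (fun n => nrm (k n) (p n x - a n x)) d)
  (p_mul_defect : forall x y,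
     bigO_U U (fun n => nrm (k n) (mul_defect mulG (p n) x y)) d).

Lemma mul_defect_bigO x y :
  bigO_U U (fun n => nrm (k n) (mul_defect mulG (a n) x y)) d.
Proof.
apply: (bigO_U_le U_mono _ (fun n =>
    nrm (k n) (p n x - a n x) + nrm (k n) (p n y - a n y)
    + nrm (k n) (mul_defect mulG (p n) x y)
    + nrm (k n) (p n (mulG x y) - a n (mulG x y)))); last first.
  by repeat apply: (bigO_UD U_mono U_meet).
move=> n; have -> : mul_defect mulG (a n) x y = (a n x *m a n y - p n x *m p n y)
    + mul_defect mulG (p n) x y + (p n (mulG x y) - a n (mulG x y)).
  by rewrite /mul_defect !subrKA.
apply: le_trans (ler_nrmD (nrmP _) _ _) _; rewrite lerD2r.
apply: le_trans (ler_nrmD (nrmP _) _ _) _; rewrite lerD2r.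
rewrite (nrm_distrC (nrmP _) (p n x)) (nrm_distrC (nrmP _) (p n y)).
exact: ler_nrm_mulmxB.
Qed.

Lemma coboundary2_mul_defect_bigO g h l :
  bigO_U U (fun n => nrm (k n) (coboundary2 mulG (p n) (mul_defect mulG (a n)) g h l))
    (fun n => d n * d n).
Proof.
pose e x n := nrm (k n) (p n x - a n x).
pose b x y n := nrm (k n) (mul_defect mulG (a n) x y).
have e_ge0 x n : 0 <= e x n by apply: nrm_ge0.
have b_ge0 x y n : 0 <= b x y n by apply: nrm_ge0.
apply: (bigO_U_le U_mono _ (fun n =>
    (b g h n * b (mulG g h) l n + b h l n * b g (mulG h l) n)
    + (b h l n * (e g n + (e g n + e (mulG h l) n))
       + b (mulG g h) l n * e (mulG (mulG g h) l) n
       + b g (mulG h l) n * e (mulG g (mulG h l)) n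
       + b g h n * e (mulG g h) n))).
  move=> n; set Ca := coboundary2 mulG (a n) (mul_defect mulG (a n)) g h l.
  rewrite -[X in nrm _ X](subrK Ca).
  apply: le_trans (ler_nrmD (nrmP _) _ _) _; rewrite addrC lerD //.
    exact: ler_nrm_coboundary2_mul_defect.
  exact: ler_nrm_coboundary2B.
have e_bigO x : bigO_U U (e x) d by apply: p_near_a.
have b_bigO x y : bigO_U U (b x y) d by apply: mul_defect_bigO.
repeat apply: (bigO_UD U_mono U_meet).
all: apply: (bigO_UM U_mono U_meet) => //.
  by move=> n; rewrite !addr_ge0.
by repeat apply: (bigO_UD U_mono U_meet).
Qed.

Lemma coboundary2_cmx_Ulim0 g h l : Ulim0 U d ->
  Ulim0 U (fun n => nrm (k n) (coboundary2 mulG (p n)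
             (fun x y => cmx (d n) (a n x) (a n y) (a n (mulG x y))) g h l)).
Proof.
move=> d_lim; apply: (bigO_U_Ulim0 U_mono U_meet _ _ _ _ d_lim).
  by move=> n; apply: nrm_ge0.
apply: (bigO_U_le U_mono _ _ _ _
          (bigO_U_divr U_mono _ _ d_ge0 (coboundary2_mul_defect_bigO g h l))) => n.
rewrite (coboundary2Z _ _ (mul_defect mulG (a n)) _ ((d n)^-1)%:C); last first.
  by move=> x y; rewrite cmxE.
by rewrite (nrmZ_ge0 (nrmP _)) ?invr_ge0.
Qed.

End QuasiRepresentations.

Theorem corollary3p2
  (R : realType)
  (U : (nat -> Prop) -> Prop) (HU : nonprincipal_ultrafilter U)
  (S : finType) (Rel : seq (word S))
  (G : Type) (mulG : G -> G -> G) (oneG : G) (invG : G -> G)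
  (HG : group_axioms mulG oneG invG)
  (gen : S -> G) (Hpres : is_presentation Rel mulG oneG invG gen)
  (nrm : forall m : nat, 'M[R[i]]_m -> R)
  (Hnrm : forall m : nat, ui_submult_norm (nrm m))
  (k : nat -> nat)
  (phi : forall n : nat, S -> 'M[R[i]]_(k n))
  (Hphi : forall n (s : S), unitary (phi n s))
  (Hdef : Ulim0 U (fun n => defect (nrm (k n)) Rel (phi n)))
  (sigma : G -> word S)
  (Hsigma : forall g : G, eval_word mulG oneG invG gen (sigma g) = g)
  (psi : forall n : nat, G -> 'M[R[i]]_(k n))
  (Hpsi_unit : forall n g, unitary (psi n g))
  (Hpsi1 : forall n, psi n oneG = 1%:M)
  (Hpsi_inv : forall n g, psi n (invG g) = mxadj (psi n g))
  (Hpsi_close : forall g : G,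
     bigO_U U (fun n => nrm (k n) (word_mx (phi n) (sigma g) - psi n g))
              (fun n => defect (nrm (k n)) Rel (phi n))) :
  let c n g h := cmx (defect (nrm (k n)) Rel (phi n))
                     (psi n g) (psi n h) (psi n (mulG g h)) in
  (* representative of phi_U(g) *)
  let phiU n g := word_mx (phi n) (sigma g) in
  (* representative of alpha(g,h) = c(g,h) phi_U(gh)^* *)
  let alpha n g h := c n g h *m mxadj (phiU n (mulG g h)) in
  (* representative of pi(g) T = phi_U(g) T phi_U(g)^* *)
  let pi n g (T : 'M[R[i]]_(k n)) := phiU n g *m T *m mxadj (phiU n g) in
  forall g h l : G,
    Ulim0 U (fun n => nrm (k n)
      (pi n g (alpha n h l) - alpha n (mulG g h) l
       + alpha n g (mulG h l) - alpha n g h)).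
Proof.
move=> c phiU alpha pi g h l.
case: HU => U_T [_ [U_mono [U_meet _]]].
have [mulA _ _ _ _] := HG.
have phiU_mul_defect x y : bigO_U U (fun n => nrm (k n) (mul_defect mulG (phiU n) x y))
                                   (fun n => defect (nrm (k n)) Rel (phi n)).
  have [N HN] := section_mul_defect_bound R x y HG Hpres Hsigma.
  by apply: (bigO_U_bound U_T U_mono _ _ N%:R) => n; apply: HN.
have def_ge0 n : 0 <= defect (nrm (k n)) Rel (phi n) by apply: defect_ge0.
have phiU_unitary n x : unitary (phiU n x) by apply: word_mx_unitary.
exact: (coboundary2_cmx_Ulim0 U_mono U_meet Hnrm def_ge0 mulA Hpsi_unit
          phiU_unitary Hpsi_close phiU_mul_defect g h l Hdef).
Qed.
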